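(* Let $H$ be a finite connected graph (loops allowed) with at least one edge. Then $\hom(\mathbb{T}^r,H)$ has long range action for no positive integer $r$ if and only if $H$ is dismantlable.
   Context: $N(i)$ is the set of nodes adjacent to $i$ (containing $i$ iff $i$ is looped). If $i\neq j$ are nodes with $N(i)\subseteq N(j)$, the map sending $i$ to $j$ and fixing other nodes is a fold of $H$ onto $H\setminus\{i\}$; $H$ is dismantlable if some sequence of folds reduces it to a single node. $\mathbb{T}^r$ is the infinite connected cycle-free graph with all degrees $r+1$, with a fixed root site $x$; $\hom(\mathbb{T}^r,H)$ is the set of graph homomorphisms $\mathbb{T}^r\to H$. $\hom(\mathbb{T}^r,H)$ has long range action if there exist $\varphi\in\hom(\mathbb{T}^r,H)$ and a node $i$ of $H$ such that for every $n\ge1$, no $\psi\in\hom(\mathbb{T}^r,H)$ which agrees with $\varphi$ on all sites at distance $n$ from $x$ satisfies $\psi(x)=i$. *)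

From mathcomp Require Import all_boot.
Set Implicit Arguments. Unset Strict Implicit. Unset Printing Implicit Defensive.

(* Graphs H: a finite type T of nodes with a symmetric relation e (loops allowed). *)

Definition nbhd (T : finType) (e : rel T) (A : {set T}) (i : T) : {set T} :=
  [set k in A | e i k].

Inductive dism (T : finType) (e : rel T) : {set T} -> Prop :=
| dism_single : forall A : {set T}, #|A| = 1 -> dism e A
| dism_fold : forall (A : {set T}) (i j : T),
    i \in A -> j \in A -> i != j ->
    nbhd e A i \subset nbhd e A j ->
    dism e (A :\ i) -> dism e A.

Definition dismantlable (T : finType) (e : rel T) : Prop := dism e [set: T].

(* The tree T^r: the Cayley graph of the free product of r+1 copies of Z/2,
   i.e. reduced words over 'I_(r+1) (no two consecutive letters equal);
   the root is the empty word, and s is adjacent to c :: s.  Every vertex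
   has degree r+1 and the graph is connected and cycle-free. *)
Definition tree_word (r : nat) (s : seq 'I_r.+1) : bool :=
  sorted (fun a b : 'I_r.+1 => a != b) s.

Definition site (r : nat) := {s : seq 'I_r.+1 | tree_word s}.

Definition root (r : nat) : site r := exist _ [::] isT.

Definition tadj (r : nat) (u v : site r) : Prop :=
  (exists c, proj1_sig v = c :: proj1_sig u) \/
  (exists c, proj1_sig u = c :: proj1_sig v).

Definition dist_root (r : nat) (u : site r) : nat := size (proj1_sig u).

Definition is_hom (r : nat) (T : finType) (e : rel T) (phi : site r -> T) : Prop :=
  forall u v : site r, tadj u v -> e (phi u) (phi v).

Definition long_range_action (r : nat) (T : finType) (e : rel T) : Prop :=
  exists (phi : site r -> T) (i : T), is_hom e phi /\
    forall n : nat, 1 <= n ->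
      ~ (exists psi : site r -> T, is_hom e psi /\
           (forall u : site r, dist_root u = n -> psi u = phi u) /\
           psi (root r) = i).

Definition connected_graph (T : finType) (e : rel T) : Prop :=
  forall x y : T, connect e x y.

From Pilot Require Import Defs.
From mathcomp Require Import all_boot zify.
From Stdlib Require Import Classical.
Set Implicit Arguments. Unset Strict Implicit.

(* If H is dismantlable, composing its folds gives maps g_0 = id, ..., g_K = const z
   with g_(t+1) x ~ g_t y whenever x ~ y; as H has an edge, z is looped, and appending
   a walk from z to i gives such maps h_0 = id, ..., h_n = const i.  For any
   homomorphism phi, the map u |-> h_(n - |u|) (phi u) on the ball of radius n is then
   a homomorphism agreeing with phi on the sphere and sending the root to i.
   If H is not dismantlable, folding as long as possible retracts H (by rho) onto an
   induced subgraph B with two or more nodes in which no N_B(i) is contained in any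
   N_B(j).  With enough children per site there is a homomorphism phi into B such that
   the children of every site u take all the values in N_B(phi u).  If psi agrees with
   phi on a sphere, then rho o psi = phi inwards: at a site u, every node of N_B(phi u)
   is phi v = rho (psi v) for a child v, so N_B(phi u) is contained in
   N_B(rho (psi u)), forcing rho (psi u) = phi u.  So the root value is frozen. *)

Definition child (r : nat) (u v : site r) : Prop := exists c, sval v = c :: sval u.

Lemma cons_tree_word r (s : seq 'I_r.+1) (c1 c2 : 'I_r.+1) :
  tree_word s -> c1 != c2 -> tree_word (c1 :: s) \/ tree_word (c2 :: s).
Proof.
case: s => [|a s] ws c12; first by left.
rewrite /tree_word /= in ws *.
case: (eqVneq c1 a) => [c1a | c1a]; last by left; apply/andP.
by right; rewrite -{1}c1a eq_sym c12.
Qed.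

(* Two letters of each residue are available, so one of them differs from the
   first letter of u. *)
Lemma child_with_residue r N (u : site r) k : 2 * N <= r.+1 -> k < N ->
  exists (c : 'I_r.+1) (v : site r), sval v = c :: sval u /\ c %% N = k.
Proof.
move=> rN kN.
have k1 : k < r.+1 by lia.
have k2 : k + N < r.+1 by lia.
have c12 : Ordinal k1 != Ordinal k2 by rewrite -val_eqE /=; lia.
case: (cons_tree_word (svalP u) c12) => w.
- exists (Ordinal k1), (exist (fun s => tree_word s) _ w).
  by rewrite /= modn_small.
- exists (Ordinal k2), (exist (fun s => tree_word s) _ w).
  by rewrite /= modnDr modn_small.
Qed.

Section Dismantling.
Variables (T : finType) (e : rel T).
Hypothesis e_sym : symmetric e.

Definition adjacent_on (A : {set T}) (f g : T -> T) : Prop :=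
  {in A &, forall x y, e x y -> e (f x) (g y)}.

Definition fold (i j x : T) : T := if x == i then j else x.

Section FoldStep.
Variables (A : {set T}) (i j : T).
Hypotheses (jA : j \in A) (ij : i != j) (sub_ij : nbhd e A i \subset nbhd e A j).

Lemma fold_adj x y : y \in A -> e x y -> e (fold i j x) y.
Proof.
move=> yA exy; rewrite /fold; case: eqP => [xi | //]; subst x.
have /(subsetP sub_ij) : y \in nbhd e A i by rewrite inE yA exy.
by rewrite inE => /andP[].
Qed.

Lemma fold_inD x : x \in A -> fold i j x \in A :\ i.
Proof.
rewrite /fold in_setD1; case: (eqVneq x i) => [_ _ | -> //].
by rewrite eq_sym ij jA.
Qed.

Lemma fold_in x : x \in A -> fold i j x \in A.
Proof. by move/fold_inD/setD1P => []. Qed.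

Lemma fold_hom : adjacent_on A (fold i j) (fold i j).
Proof.
move=> x y xA yA exy; rewrite e_sym fold_adj ?fold_in //.
by rewrite e_sym fold_adj.
Qed.

End FoldStep.

Lemma dism_contraction (A : {set T}) : dism e A ->
  exists (g : nat -> T -> T) (K : nat) (z : T),
    [/\ g 0 =1 id, forall t, adjacent_on A (g t.+1) (g t),
        forall t, adjacent_on A (g t) (g t) & {in A, forall x, g K x = z}].
Proof.
elim=> {A} [A /eqP/cards1P [a ->] |
    A i j iA jA ij sub _ [g [K [z [g0 gstep ghom gK]]]]].
  exists (fun _ x => x), 0, a.
  by split=> [// | t x y | t x y | x] //; rewrite inE => /eqP.
have foldD := fold_inD jA ij; have fold_e := fold_hom jA ij sub.
exists (fun t x => if t is s.+1 then g s (fold i j x) else x), K.+1, z.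
split=> [x // | [|t] x y xA yA exy | [|t] x y xA yA exy | x xA] /=.
- by rewrite g0 (fold_adj sub).
- exact: (gstep t _ _ (foldD _ xA) (foldD _ yA) (fold_e _ _ xA yA exy)).
- by [].
- exact: (ghom t _ _ (foldD _ xA) (foldD _ yA) (fold_e _ _ xA yA exy)).
- by rewrite gK ?foldD.
Qed.

Definition contracts_to (h : nat -> T -> T) (n : nat) (i : T) : Prop :=
  [/\ h 0 =1 id, forall t, t < n -> adjacent_on setT (h t.+1) (h t)
     & forall x, h n x = i].

Lemma dismantlable_contracts_to (x0 y0 : T) : connected_graph e -> e x0 y0 ->
  dismantlable e -> forall i, exists h n, 0 < n /\ contracts_to h n i.
Proof.
move=> conn exy0 /dism_contraction [g [K [z [g0 gstep ghom gK]]]] i.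
have ezz : e z z.
  by have := ghom K x0 y0 (in_setT _) (in_setT _) exy0; rewrite !gK ?in_setT.
have /connectP [p zp ip] := conn z i.
pose w := z :: z :: p.
have zzp : path e z (z :: p) by rewrite /= ezz.
have wpath s : s <= size p -> e (nth z w s.+1) (nth z w s).
  by move=> sp; rewrite e_sym; apply: (pathP z zzp).
pose h t x := if t <= K then g t x else nth z w (t - K).
have hK t x : K <= t -> h t x = nth z w (t - K).
  rewrite /h; case: (leqP t K) => // tK Kt; have -> : t = K by lia.
  by rewrite subnn gK ?in_setT.
exists h, (K + (size p).+1); split; first lia.
split=> [x | t tn x y _ _ exy | x].
- by rewrite /h leq0n g0.
- case: (ltnP t K) => tK.
    by rewrite /h tK ltnW //; apply: gstep; rewrite ?in_setT.
  rewrite !hK ?(leqW tK) // subSn //; apply: wpath; lia.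
- by rewrite hK ?leq_addr // addKn ip (last_nth z).
Qed.

Lemma contracts_to_extension r (phi : site r -> T) h n i :
  is_hom e phi -> contracts_to h n i ->
  exists psi : site r -> T, is_hom e psi /\
    (forall u, dist_root u = n -> psi u = phi u) /\ psi (Defs.root r) = i.
Proof.
move=> phi_hom [h0 hstep hn].
pose psi u := if dist_root u <= n then h (n - dist_root u) (phi u) else phi u.
have psi_child u v : child u v -> e (psi u) (psi v).
  move=> [c vc]; have euv : e (phi u) (phi v) by apply: phi_hom; left; exists c.
  have dv : dist_root v = (dist_root u).+1 by rewrite /dist_root vc.
  rewrite /psi dv; case: (ltngtP (dist_root u) n) => un.
  - have -> : n - dist_root u = (n - (dist_root u).+1).+1 by lia.
    by apply: hstep; rewrite ?in_setT //; lia.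
  - by [].
  - by rewrite un subnn h0.
exists psi; split; [|split].
- by move=> u v [uv | vu]; [apply: psi_child | rewrite e_sym; apply: psi_child].
- by move=> u un; rewrite /psi un leqnn subnn h0.
- by rewrite /psi /dist_root /= subn0.
Qed.

Lemma dismantlable_no_long_range_action r (x0 y0 : T) :
  connected_graph e -> e x0 y0 -> dismantlable e -> ~ long_range_action r e.
Proof.
move=> conn exy0 dis [phi [i [phi_hom no_ext]]].
have [h [n [n_gt0 hn]]] := dismantlable_contracts_to conn exy0 dis i.
exact: no_ext n n_gt0 (contracts_to_extension phi_hom hn).
Qed.

Definition retraction (B : {set T}) (rho : T -> T) : Prop :=
  [/\ forall x, rho x \in B, {in B, forall x, rho x = x}
     & forall x y, e x y -> e (rho x) (rho y)].

Definition stiff (B : {set T}) : Prop :=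
  {in B &, forall i j, i != j -> ~~ (nbhd e B i \subset nbhd e B j)}.

Lemma retraction_fold (B : {set T}) rho i j : retraction B rho -> j \in B -> i != j ->
  nbhd e B i \subset nbhd e B j -> retraction (B :\ i) (fold i j \o rho).
Proof.
move=> [rhoB rho_id rho_hom] jB ij sub.
split=> [x | x /setD1P [xi xB] | x y exy] /=.
- exact: fold_inD.
- by rewrite rho_id // /fold (negbTE xi).
- exact: (fold_hom jB ij sub (rhoB x) (rhoB y) (rho_hom _ _ exy)).
Qed.

Lemma stiff_retraction (x0 : T) : ~ dismantlable e ->
  exists B rho, [/\ retraction B rho, 1 < #|B| & stiff B].
Proof.
move=> nd; suff: forall n (B : {set T}) rho,
    #|B| < n -> retraction B rho -> ~ dism e B ->
    exists B rho, [/\ retraction B rho, 1 < #|B| & stiff B].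
  by move/(_ _ [set: T] id (ltnSn _)); apply; first split.
elim=> // n IH B rho Bn rhoB ndB.
case: (boolP [exists i, exists j,
    [&& i \in B, j \in B, i != j & nbhd e B i \subset nbhd e B j]]).
- case/existsP=> i /existsP [j /and4P [iB jB ij sub]].
  apply: (IH (B :\ i) (fold i j \o rho)).
  + by rewrite (cardsD1 i B) iB in Bn.
  + exact: retraction_fold.
  + by move=> dBi; apply: ndB; apply: dism_fold iB jB ij sub dBi.
- rewrite negb_exists => /forallP no_fold; exists B, rho; split=> //.
  + have B0 : 0 < #|B| by apply/card_gt0P; exists (rho x0); case: rhoB.
    rewrite ltn_neqAle B0 andbT.
    by apply/negP => /eqP B1; apply: ndB; apply: dism_single; rewrite -B1.
  + move=> i j iB jB ij; apply/negP => sub.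
    by have := no_fold i; rewrite negb_exists => /forallP /(_ j); rewrite iB jB ij sub.
Qed.

Lemma stiff_neighbour (B : {set T}) : 1 < #|B| -> stiff B ->
  {in B, forall x, exists2 y, y \in B & e x y}.
Proof.
move=> /card_gt1P [a [b [aB bB ab]]] st x xB.
have [j jB xj] : exists2 j, j \in B & x != j.
  by case: (eqVneq x a) => [-> | xa]; [exists b | exists a].
have /subsetPn [y] := st x j xB jB xj.
by rewrite inE => /andP [yB exy] _; exists y.
Qed.

Lemma covering_hom r (B : {set T}) a : 2 * #|T| <= r.+1 -> a \in B ->
  {in B, forall x, exists2 y, y \in B & e x y} ->
  exists phi : site r -> T, [/\ is_hom e phi, forall u, phi u \in B &
    forall u w, w \in B -> e (phi u) w -> exists2 v, child u v & phi v = w].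
Proof.
move=> rT aB nbr.
pose nb x := odflt x [pick y in B | e x y].
have nbP x : x \in B -> (nb x \in B) && e x (nb x).
  move=> xB; rewrite /nb; case: pickP => [y // | none].
  by have [y yB exy] := nbr x xB; have := none y; rewrite yB exy.
pose f x (c : 'I_r.+1) := let y := nth x (enum T) (c %% #|T|) in
  if (y \in B) && e x y then y else nb x.
have fP x c : x \in B -> (f x c \in B) && e x (f x c).
  by move=> xB; rewrite /f; case: ifP => // _; apply: nbP.
pose phi (u : site r) := foldr (fun c x => f x c) a (sval u).
have phiB u : phi u \in B.
  by rewrite /phi; elim: (sval u) => //= c s IH; case/andP: (fP _ c IH).
have phi_child u v : child u v -> e (phi u) (phi v).
  by move=> [c vc]; rewrite /phi vc /=; case/andP: (fP _ c (phiB u)).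
exists phi; split=> [u v [uv | vu] | // | u w wB ew].
- exact: phi_child.
- by rewrite e_sym; apply: phi_child.
- have kT : index w (enum T) < #|T| by rewrite cardT index_mem mem_enum.
  have [c [v [vc cw]]] := child_with_residue u rT kT.
  exists v; first by exists c.
  by rewrite /phi vc /= /f /= cw nth_index ?mem_enum // wB ew.
Qed.

Lemma stiff_rigidity r (B : {set T}) rho (phi psi : site r -> T) n :
  retraction B rho -> stiff B -> (forall u, phi u \in B) ->
  (forall u w, w \in B -> e (phi u) w -> exists2 v, child u v & phi v = w) ->
  is_hom e psi -> (forall u, dist_root u = n -> psi u = phi u) ->
  rho (psi (Defs.root r)) = phi (Defs.root r).
Proof.
move=> [rhoB rho_id rho_hom] st phiB cover psi_hom agree.
suff frozen k u : dist_root u + k = n -> rho (psi u) = phi u by exact: frozen.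
elim: k u => [|k IH] u du.
  by rewrite agree ?rho_id // -du addn0.
case: (eqVneq (phi u) (rho (psi u))) => [-> // | ne].
case/negP: (st _ _ (phiB u) (rhoB (psi u)) ne).
apply/subsetP => w; rewrite !inE => /andP [wB ew]; rewrite wB /=.
have [v [c vc] <-] := cover u w wB ew.
rewrite -(IH v); first by apply: rho_hom; apply: psi_hom; left; exists c.
by rewrite /dist_root vc /= addSnnS.
Qed.

Lemma stiff_long_range_action r (B : {set T}) rho : 2 * #|T| <= r.+1 ->
  retraction B rho -> 1 < #|B| -> stiff B -> long_range_action r e.
Proof.
move=> rT rhoB B1 st; have /card_gt1P [a [b [aB bB ab]]] := B1.
have [phi [phi_hom phiB cover]] := covering_hom rT aB (stiff_neighbour B1 st).
pose i := if a == phi (Defs.root r) then b else a.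
have iB : i \in B by rewrite /i; case: ifP.
have i_root : i != phi (Defs.root r).
  by rewrite /i; case: (eqVneq a (phi (Defs.root r))) => [<- | //]; rewrite eq_sym.
exists phi, i; split=> // n _ [psi [psi_hom [agree psi_root]]].
move/eqP: i_root; apply.
have := stiff_rigidity rhoB st phiB cover psi_hom agree.
by rewrite psi_root; case: rhoB => _ -> .
Qed.

End Dismantling.

Theorem mainTheorem10 (T : finType) (e : rel T) :
  symmetric e ->
  connected_graph e ->
  (exists x y : T, e x y) ->
  ((forall r : nat, 0 < r -> ~ long_range_action r e) <-> dismantlable e).
Proof.
move=> e_sym conn [x0 [y0 exy0]]; split=> [no_lra | dis r _].
- apply: NNPP => nd.
  have [B [rho [rhoB B1 st]]] := stiff_retraction e_sym x0 nd.
  apply: (no_lra (2 * #|T|)) (stiff_long_range_action e_sym (leqnSn _) rhoB B1 st).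
  by rewrite muln_gt0 /=; apply/card_gt0P; exists x0.
- exact: (dismantlable_no_long_range_action e_sym conn exy0 dis).
Qed.
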